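(* Let $T=T_\lambda$ ($\lambda\in(1,2)$) be a tent map with critical point $c$ and kneading sequence $K$. For $n\in\mathbb N$ and $\mathbf s\in\{0,1\}^n$, the sequence $\mathbf s^\frown\mathcal I(c)$ is the itinerary of some pre-critical point (a point $p$ with $T^i(p)=c$ for some $i$) in $[0,T(c)]$ if and only if at least one of the following holds: (1) $\mathbf s=0^n$; (2) $\sigma^k(\mathbf s^\frown\mathcal I(c))\prec K$ for every $0\le k\le n$; (3) $c$ lies in a periodic orbit of period $m$ with $\mathcal I(c)=(C^\frown\mathbf t)^\infty$ (so $\mathbf t\in\{0,1\}^{m-1}$) and $\mathbf s=\sigma^k(\mathbf t)$ (the word $\mathbf t$ with its first $k$ symbols deleted) for some $0\le k<m-1$.
   Context: For $\lambda\in(1,2]$ the tent map $T_\lambda:[0,1]\to[0,1]$ is $T_\lambda(x)=\lambda x$ on $[0,1/2]$ and $\lambda(1-x)$ on $[1/2,1]$, with critical point $c=1/2$. $\Omega=\{0,1,C\}$. The address of $x$ is $0$ if $x<c$, $C$ if $x=c$, $1$ if $x>c$; the itinerary $\mathcal I(x)$ is the sequence of addresses of $x,T(x),T^2(x),\dots$; $\mathcal I^+(x)=\lim_{y\downarrow x}\mathcal I(y)$ in the product topology on $\Omega^{\mathbb N}$. The kneading sequence is $K=\sigma(\mathcal I^+(c))$, $\sigma$ the shift; $^\frown$ denotes concatenation. A word is even if it contains an even number of $1$'s, odd otherwise. Parity lexicographic order: $0<C<1$; for sequences $\mathbf s\ne\mathbf t$ first differing at index $k$, $\mathbf s\prec\mathbf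 t$ iff either $s_0\dots s_{k-1}$ is even and $s_k<t_k$, or it is odd and $s_k>t_k$. *)

From Stdlib Require Import Reals Lra List Arith.
Open Scope R_scope.

Inductive sym : Type := S0 | SC | S1.

Definition tent (lam x : R) : R :=
  if Rle_dec x (1/2) then lam * x else lam * (1 - x).

Definition crit : R := 1/2.

Fixpoint iterT (lam : R) (n : nat) (x : R) : R :=
  match n with
  | O => x
  | S k => tent lam (iterT lam k x)
  end.

Definition address (x : R) : sym :=
  match total_order_T x crit with
  | inleft (left _) => S0
  | inleft (right _) => SC
  | inright _ => S1
  end.

Definition itin (lam x : R) : nat -> sym := fun n => address (iterT lam n x).

(* s is the right limit I^+(x) = lim_{y downarrow x} I(y) in the product
   topology on Omega^N: every finite prefix is eventually constant. *)
Definition right_limit_itin (lam x : R) (s : nat -> sym) : Prop :=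
  forall N : nat, exists delta : R, 0 < delta /\
    forall y : R, x < y < x + delta -> forall i : nat, (i <= N)%nat -> itin lam y i = s i.

Definition shift (k : nat) (u : nat -> sym) : nat -> sym := fun i => u (i + k)%nat.

Definition wconcat (w : list sym) (u : nat -> sym) : nat -> sym :=
  fun i => if Nat.ltb i (length w) then nth i w S0 else u (i - length w)%nat.

Definition repeat_inf (w : list sym) : nat -> sym :=
  fun i => nth (i mod length w) w S0.

Definition sym_rank (a : sym) : nat :=
  match a with S0 => 0 | SC => 1 | S1 => 2 end%nat.
Definition sym_lt (a b : sym) : Prop := (sym_rank a < sym_rank b)%nat.

Fixpoint count1 (u : nat -> sym) (k : nat) : nat :=
  match k with
  | O => O
  | S j => (count1 u j + (match u j with S1 => 1 | _ => 0 end))%nat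
  end.

Definition plex_lt (s t : nat -> sym) : Prop :=
  exists k : nat, (forall i, (i < k)%nat -> s i = t i) /\
    ((Nat.Even (count1 s k) /\ sym_lt (s k) (t k)) \/
     (Nat.Odd (count1 s k) /\ sym_lt (t k) (s k))).

Definition binary_word (w : list sym) : Prop := Forall (fun a => a = S0 \/ a = S1) w.

Definition prime_period (lam x : R) (m : nat) : Prop :=
  (1 <= m)%nat /\ iterT lam m x = x /\
  forall j : nat, (0 < j < m)%nat -> iterT lam j x <> x.

From Stdlib Require Import Reals List Arith Lra Lia Classical FunctionalExtensionality.
Open Scope R_scope.

(** Let [T = T_λ], [1 < λ < 2], and let [K = σ(I^+(c))], written [shift 1 Kplus].
    The proof rests on two classical facts.

    - Monotonicity of itineraries: if [x < w] in [[0,1]], their itineraries agree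
      (and avoid [C]) up to a first index [d] where they differ in the direction
      given by the parity order.  Proof: while they agree, [T^i] is affine between
      [x] and [w] with slope [±λ^i]; since [λ > 1] this cannot last forever.
    - Comparison with the kneading sequence: points [T(y)], [y ↓ c], approximate
      [T(c)] from below with itineraries approximating [K].  Hence a pre-critical
      point below [T(c)] has itinerary [≺ K], and one in [[T(c),1]] has itinerary [≻ K].

    Necessity: a pre-critical point [p < T(c)] has all [T^k(p)] below [T(c)], giving
    condition (2); if [p = T(c)], then [c] is periodic and [s] is its word, (3).
    Sufficiency: [0^n] and the tails of the periodic word are realized directly; a
    word satisfying (2) is realized by pulling [c] back letter by letter through the
    inverse branches of [T], condition (2) keeping each point below [T(c)]. *)


Lemma iterT_succ_inner lam n x : iterT lam (S n) x = iterT lam n (tent lam x).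
Proof. induction n as [|n IH]; simpl in *; [reflexivity | now rewrite IH]. Qed.

Lemma iterT_add lam a b x : iterT lam (a + b) x = iterT lam a (iterT lam b x).
Proof. induction a as [|a IH]; simpl; [reflexivity | now rewrite IH]. Qed.

Lemma itin_shift lam k x i : itin lam x (i + k) = itin lam (iterT lam k x) i.
Proof. unfold itin; now rewrite iterT_add. Qed.

Lemma shift_itin lam k x : shift k (itin lam x) = itin lam (iterT lam k x).
Proof. apply functional_extensionality; intro i; apply itin_shift. Qed.

Lemma itin_succ lam x i : itin lam x (S i) = itin lam (tent lam x) i.
Proof. unfold itin; now rewrite iterT_succ_inner. Qed.

Lemma address_S0 x : address x = S0 <-> x < crit.
Proof.
  unfold address; destruct (total_order_T x crit) as [[H|H]|H];
    split; intro; try lra; try discriminate; auto.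
Qed.

Lemma address_SC x : address x = SC <-> x = crit.
Proof.
  unfold address; destruct (total_order_T x crit) as [[H|H]|H];
    split; intro; try lra; try discriminate; auto.
Qed.

Lemma address_S1 x : address x = S1 <-> crit < x.
Proof.
  unfold address; destruct (total_order_T x crit) as [[H|H]|H];
    split; intro; try lra; try discriminate; auto.
Qed.

Lemma address_lt a b : a < b -> address a <> address b -> sym_lt (address a) (address b).
Proof.
  intros Hab Hne; unfold sym_lt, address, sym_rank in *;
  destruct (total_order_T a crit) as [[?|?]|?]; destruct (total_order_T b crit) as [[?|?]|?];
  try lia; try congruence; exfalso; lra.
Qed.

Lemma tent_crit lam : tent lam crit = lam / 2.
Proof. unfold tent, crit; destruct Rle_dec; lra. Qed.

Lemma tent_le_max lam x : 0 < lam -> tent lam x <= lam / 2.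
Proof. intros; unfold tent; destruct Rle_dec; nra. Qed.

Lemma tent_eq_max lam x : 0 < lam -> tent lam x = lam / 2 -> x = crit.
Proof. intros H; unfold tent, crit; destruct Rle_dec; intro E; nra. Qed.

Lemma tent_right lam y : crit < y -> tent lam y = lam * (1 - y).
Proof. unfold tent, crit; destruct Rle_dec; lra. Qed.

Lemma tent_unit lam x : 0 < lam <= 2 -> 0 <= x <= 1 -> 0 <= tent lam x <= 1.
Proof. intros; unfold tent; destruct Rle_dec; split; nra. Qed.

Lemma iterT_unit lam n x : 0 < lam <= 2 -> 0 <= x <= 1 -> 0 <= iterT lam n x <= 1.
Proof. intros; induction n; simpl; auto; now apply tent_unit. Qed.

Lemma tent_same_branch lam a b : address a = address b -> address a <> SC ->
  (address a = S0 /\ tent lam b - tent lam a = lam * (b - a)) \/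
  (address a = S1 /\ tent lam b - tent lam a = - (lam * (b - a))).
Proof.
  intros He Hn; unfold tent, address in *.
  destruct (total_order_T a crit) as [[?|?]|?]; destruct (total_order_T b crit) as [[?|?]|?];
    try congruence; unfold crit in *;
    destruct (Rle_dec a (1/2)); destruct (Rle_dec b (1/2)); try lra;
    [left | right]; split; auto; ring.
Qed.

(** * Words and the parity-lexicographic order *)

Lemma wconcat_nil u : wconcat nil u = u.
Proof. apply functional_extensionality; intro i; unfold wconcat; simpl; now rewrite Nat.sub_0_r. Qed.

Lemma wconcat_cons a w u :
  wconcat (a :: w) u = fun i => match i with O => a | S j => wconcat w u j end.
Proof. now apply functional_extensionality; intros [|i]. Qed.

Lemma wconcat_lt w u i : (i < length w)%nat -> wconcat w u i = nth i w S0.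
Proof. intro H; unfold wconcat; apply Nat.ltb_lt in H; now rewrite H. Qed.

Lemma wconcat_length w u : wconcat w u (length w) = u O.
Proof. unfold wconcat; now rewrite Nat.ltb_irrefl, Nat.sub_diag. Qed.

Lemma shift_0 u : shift 0 u = u.
Proof. apply functional_extensionality; intro i; unfold shift; now rewrite Nat.add_0_r. Qed.

Lemma shift_succ_cons a w u k : shift (S k) (wconcat (a :: w) u) = shift k (wconcat w u).
Proof. apply functional_extensionality; intro i; unfold shift; now rewrite Nat.add_succ_r. Qed.

Lemma count1_ext u v k : (forall i, (i < k)%nat -> u i = v i) -> count1 u k = count1 v k.
Proof.
  induction k as [|k IH]; intro H; simpl; auto.
  rewrite IH by (intros; apply H; lia).
  now rewrite H by lia.
Qed.

Lemma plex_lt_of_prefix a b a' b' d :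
  (forall i, (i < d)%nat -> a i = b i) ->
  ((Nat.Even (count1 a d) /\ sym_lt (a d) (b d)) \/
   (Nat.Odd (count1 a d) /\ sym_lt (b d) (a d))) ->
  (forall i, (i <= d)%nat -> a' i = a i) -> (forall i, (i <= d)%nat -> b' i = b i) ->
  plex_lt a' b'.
Proof.
  intros Hpre Hd Ha Hb; exists d; split.
  - intros i Hi; rewrite Ha, Hb by lia; auto.
  - rewrite (count1_ext a' a d) by (intros; apply Ha; lia).
    now rewrite Ha, Hb by lia.
Qed.

Lemma plex_lt_asym a b : plex_lt a b -> plex_lt b a -> False.
Proof.
  intros [k1 [H1 C1]] [k2 [H2 C2]]; unfold sym_lt in *.
  destruct (lt_eq_lt_dec k1 k2) as [[Hl|He]|Hl].
  - rewrite (H2 k1 Hl) in C1; destruct C1 as [[_ X]|[_ X]]; lia.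
  - subst; rewrite (count1_ext b a k2) in C2 by (intros; symmetry; auto).
    destruct C1 as [[E1 X1]|[E1 X1]]; destruct C2 as [[E2 X2]|[E2 X2]]; try lia;
      eapply Nat.Even_Odd_False; eauto.
  - rewrite (H1 k2 Hl) in C2; destruct C2 as [[_ X]|[_ X]]; lia.
Qed.

(** * Itineraries are monotone for the parity-lexicographic order *)

(** [agree_expand lam x w i]: the itineraries of [x] and [w] agree, and avoid [C],
    on [0..i-1], so that [T^i] is affine between [x] and [w] with slope [±λ^i],
    the sign being given by the parity of the number of 1's seen so far. *)
Definition agree_expand (lam x w : R) (i : nat) : Prop :=
  (forall j, (j < i)%nat -> itin lam x j = itin lam w j /\ itin lam x j <> SC) /\
  ((Nat.Even (count1 (itin lam x) i) /\ iterT lam i w - iterT lam i x = lam ^ i * (w - x)) \/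
   (Nat.Odd (count1 (itin lam x) i) /\ iterT lam i w - iterT lam i x = - (lam ^ i * (w - x)))).

Lemma agree_expand_0 lam x w : agree_expand lam x w 0.
Proof. split; [intros; lia | left; split; [exists 0%nat; reflexivity | simpl; ring]]. Qed.

Lemma agree_expand_succ lam x w i :
  agree_expand lam x w i -> itin lam x i = itin lam w i -> itin lam x i <> SC ->
  agree_expand lam x w (S i).
Proof.
  intros [Hpre Hdiff] Heq HnC; split.
  - intros j Hj; destruct (Nat.eq_dec j i) as [->|]; auto; apply Hpre; lia.
  - cbn [count1 iterT pow].
    destruct (tent_same_branch lam _ _ Heq HnC) as [[A D]|[A D]];
      change (address (iterT lam i x)) with (itin lam x i) in A; rewrite A, D.
    + rewrite Nat.add_0_r.
      destruct Hdiff as [[E D']|[E D']]; [left | right]; split; auto; rewrite D'; ring.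
    + rewrite Nat.add_1_r.
      destruct Hdiff as [[E D']|[E D']]; [right | left]; split; try (rewrite D'; ring).
      * now apply Nat.Odd_succ.
      * now apply Nat.Even_succ.
Qed.

(** Since [T^i] maps into [[0,1]], the expanded distance stays at most 1 ... *)
Lemma agree_expand_bounded lam x w i : 0 < lam <= 2 -> 0 <= x -> x < w -> w <= 1 ->
  agree_expand lam x w i -> lam ^ i * (w - x) <= 1.
Proof.
  intros Hl Hx Hxw Hw [_ Hdiff].
  pose proof (iterT_unit lam i x Hl ltac:(lra)); pose proof (iterT_unit lam i w Hl ltac:(lra)).
  assert (0 < lam ^ i * (w - x)) by (apply Rmult_lt_0_compat; [apply pow_lt|]; lra).
  destruct Hdiff as [[_ D]|[_ D]]; lra.
Qed.

(** ... so, as [λ > 1], agreement must break down at some finite time. *)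
Lemma agree_expand_breaks lam x w : 1 < lam <= 2 -> 0 <= x -> x < w -> w <= 1 ->
  exists d, agree_expand lam x w d /\ ~ agree_expand lam x w (S d).
Proof.
  intros Hl Hx Hxw Hw.
  destruct (Pow_x_infinity lam ltac:(rewrite Rabs_right; lra) (2 / (w - x))) as [N HN].
  specialize (HN N (le_n N)).
  rewrite Rabs_right in HN by (apply Rle_ge, pow_le; lra).
  apply Rge_le, (Rmult_le_compat_r (w - x)) in HN; [|lra].
  replace (2 / (w - x) * (w - x)) with 2 in HN by (field; lra).
  apply NNPP; intro Hnone.
  assert (Hall : forall d, agree_expand lam x w d).
  { induction d as [|d IH]; [apply agree_expand_0|].
    apply NNPP; intro Hn; apply Hnone; now exists d. }
  pose proof (agree_expand_bounded lam x w N ltac:(lra) Hx Hxw Hw (Hall N)); lra.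
Qed.

Lemma itin_first_difference lam x w : 1 < lam <= 2 -> 0 <= x -> x < w -> w <= 1 ->
  exists d,
    (forall j, (j < d)%nat -> itin lam x j = itin lam w j /\ itin lam x j <> SC) /\
    ((Nat.Even (count1 (itin lam x) d) /\ sym_lt (itin lam x d) (itin lam w d)) \/
     (Nat.Odd (count1 (itin lam x) d) /\ sym_lt (itin lam w d) (itin lam x d))).
Proof.
  intros Hl Hx Hxw Hw.
  destruct (agree_expand_breaks lam x w Hl Hx Hxw Hw) as [d [Hd Hbreak]].
  assert (Hgap : 0 < lam ^ d * (w - x)) by (apply Rmult_lt_0_compat; [apply pow_lt|]; lra).
  assert (Hne : itin lam x d <> itin lam w d).
  { intro Heq; apply Hbreak, agree_expand_succ; auto.
    intro HC; rewrite HC in Heq; unfold itin in HC, Heq.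
    apply address_SC in HC; symmetry in Heq; apply address_SC in Heq.
    destruct Hd as [_ [[_ D]|[_ D]]]; rewrite HC, Heq in D; lra. }
  exists d; split; [apply Hd|].
  destruct Hd as [_ [[E D]|[E D]]]; [left | right]; split; auto; apply address_lt; auto; lra.
Qed.

Lemma plex_lt_of_points lam x w j u v : 1 < lam <= 2 -> 0 <= x -> x < w -> w <= 1 ->
  (itin lam x j = SC \/ itin lam w j = SC) ->
  (forall i, (i <= j)%nat -> u i = itin lam x i) ->
  (forall i, (i <= j)%nat -> v i = itin lam w i) ->
  plex_lt u v.
Proof.
  intros Hl Hx Hxw Hw HC Hu Hv.
  destruct (itin_first_difference lam x w Hl Hx Hxw Hw) as [d [Hpre Hd]].
  assert (Hdj : (d <= j)%nat).
  { destruct (le_lt_dec d j) as [|Hjd]; auto.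
    destruct (Hpre j Hjd) as [Heq HnC]; exfalso; destruct HC; congruence. }
  apply (plex_lt_of_prefix (itin lam x) (itin lam w) u v d); auto.
  - intros i Hi; apply Hpre, Hi.
  - intros i Hi; apply Hu; lia.
  - intros i Hi; apply Hv; lia.
Qed.

(** * Comparison with the kneading sequence *)

Section Kneading.

Variables (lam : R) (Kplus : nat -> sym).
Hypothesis Hlam : 1 < lam <= 2.
Hypothesis HKplus : right_limit_itin lam crit Kplus.

(** Points [T(y)], for [y] slightly to the right of [c], lie just below [T(c) = λ/2]
    and have itineraries agreeing with [σ(K)] on any prescribed finite prefix. *)
Lemma kneading_approximation a N : a < lam / 2 ->
  exists v, 0 <= v /\ a < v < lam / 2 /\
    forall i, (i <= N)%nat -> shift 1 Kplus i = itin lam v i.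
Proof.
  intro Ha.
  destruct (HKplus (S N)) as [del [Hdel Hnear]].
  set (e := Rmin del (Rmin 1 ((lam / 2 - a) / lam))).
  assert (He0 : 0 < e).
  { apply Rmin_glb_lt; auto; apply Rmin_glb_lt; [lra | apply Rdiv_lt_0_compat; lra]. }
  assert (Hedel : e <= del) by apply Rmin_l.
  assert (He1 : e <= 1) by (eapply Rle_trans; [apply Rmin_r | apply Rmin_l]).
  assert (Hea : lam * e <= lam / 2 - a).
  { assert (e <= (lam / 2 - a) / lam) by (eapply Rle_trans; [apply Rmin_r | apply Rmin_r]).
    apply (Rmult_le_compat_l lam) in H; [|lra].
    replace (lam * ((lam / 2 - a) / lam)) with (lam / 2 - a) in H by (field; lra); exact H. }
  set (y := crit + e / 2).
  assert (Hy : crit < y < crit + del) by (unfold y; lra).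
  assert (Hle : 0 < lam * e <= lam) by (split; [apply Rmult_lt_0_compat | ]; nra).
  assert (Hv : tent lam y = lam / 2 - lam * e / 2)
    by (rewrite tent_right by lra; unfold y, crit; lra).
  exists (tent lam y); split; [|split; [split|]]; try (rewrite Hv; lra).
  intros i Hi; unfold shift; rewrite Nat.add_1_r, <- itin_succ.
  symmetry; apply Hnear; [exact Hy | lia].
Qed.

Lemma itin_below_kneading x j : 0 <= x < lam / 2 -> itin lam x j = SC ->
  plex_lt (itin lam x) (shift 1 Kplus).
Proof.
  intros Hx HC.
  destruct (kneading_approximation x j (proj2 Hx)) as [v [_ [Hv Hitv]]].
  apply (plex_lt_of_points lam x v j); [lra | lra | lra | lra | now left | reflexivity | exact Hitv].
Qed.

Lemma kneading_below_itin z j : lam / 2 <= z <= 1 -> itin lam z j = SC ->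
  plex_lt (shift 1 Kplus) (itin lam z).
Proof.
  intros Hz HC.
  destruct (kneading_approximation 0 j ltac:(lra)) as [v [Hv0 [Hv Hitv]]].
  apply (plex_lt_of_points lam v z j); [lra | lra | lra | lra | now right | exact Hitv | reflexivity].
Qed.

Lemma below_critical_value z j : 0 <= z <= 1 -> itin lam z j = SC ->
  plex_lt (itin lam z) (shift 1 Kplus) -> z < lam / 2.
Proof.
  intros Hz HC Hlt.
  destruct (Rlt_le_dec z (lam / 2)) as [|Hge]; auto.
  exfalso; apply (plex_lt_asym _ _ Hlt), (kneading_below_itin z j); auto; lra.
Qed.

End Kneading.

Lemma itin_crit_0 lam : itin lam crit 0 = SC.
Proof. now apply address_SC. Qed.

Lemma precritical_time lam q s : itin lam q = wconcat s (itin lam crit) ->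
  iterT lam (length s) q = crit.
Proof.
  intro E; apply address_SC; change (itin lam q (length s) = SC).
  now rewrite E, wconcat_length, itin_crit_0.
Qed.

Lemma precritical_not_before lam q s : binary_word s ->
  itin lam q = wconcat s (itin lam crit) ->
  forall j, (j < length s)%nat -> iterT lam j q <> crit.
Proof.
  intros Hbin E j Hj HC; apply address_SC in HC; change (itin lam q j = SC) in HC.
  rewrite E, wconcat_lt in HC by exact Hj.
  unfold binary_word in Hbin; rewrite Forall_forall in Hbin.
  destruct (Hbin _ (nth_In _ S0 Hj)) as [X|X]; rewrite X in HC; discriminate.
Qed.

Lemma orbit_below_critical_value lam p k : 0 < lam -> p < lam / 2 ->
  (forall j, (j < k)%nat -> iterT lam j p <> crit) -> iterT lam k p < lam / 2.
Proof.
  intros Hl Hp Havoid; destruct k as [|k]; [exact Hp|]; simpl.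
  destruct (Rle_lt_or_eq_dec _ _ (tent_le_max lam (iterT lam k p) Hl)) as [|E]; auto.
  exfalso; apply (Havoid k); [lia | now apply tent_eq_max in E].
Qed.

Lemma itin_cons lam x w u : itin lam (tent lam x) = wconcat w u ->
  itin lam x = wconcat (address x :: w) u.
Proof.
  intro E; rewrite wconcat_cons; apply functional_extensionality; intros [|i].
  - reflexivity.
  - now rewrite itin_succ, E.
Qed.

(** * Realizing itineraries by inverse branches of [T] *)

Lemma left_preimage lam q w u : 1 < lam -> 0 <= q < lam / 2 ->
  itin lam q = wconcat w u ->
  0 <= q / lam < crit /\ itin lam (q / lam) = wconcat (S0 :: w) u.
Proof.
  intros Hl Hq E.
  assert (Hx : 0 <= q / lam < crit).
  { unfold crit; split; [apply Rle_mult_inv_pos; lra|].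
    apply (Rmult_lt_reg_l lam); [lra|]; replace (lam * (q / lam)) with q by (field; lra); lra. }
  split; auto.
  replace S0 with (address (q / lam)) by now apply address_S0.
  apply itin_cons; unfold tent, crit in *; destruct Rle_dec; [|lra].
  replace (lam * (q / lam)) with q by (field; lra); exact E.
Qed.

Lemma right_preimage lam q w u : 1 < lam -> 0 <= q < lam / 2 ->
  itin lam q = wconcat w u ->
  crit < 1 - q / lam <= 1 /\ itin lam (1 - q / lam) = wconcat (S1 :: w) u.
Proof.
  intros Hl Hq E.
  destruct (left_preimage lam q w u Hl Hq E) as [Hx _].
  assert (Hy : crit < 1 - q / lam <= 1) by (unfold crit in *; lra).
  split; auto.
  replace S1 with (address (1 - q / lam)) by now apply address_S1.
  apply itin_cons; rewrite tent_right by lra.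
  replace (lam * (1 - (1 - q / lam))) with q by (field; lra); exact E.
Qed.

(** The word [0^n] is always realized: take left preimages of [c] [n] times. *)
Lemma zero_word_realized lam n : 1 < lam -> exists q, 0 <= q <= crit /\
  itin lam q = wconcat (repeat S0 n) (itin lam crit).
Proof.
  intro Hl; induction n as [|n [q [Hq E]]].
  - exists crit; rewrite wconcat_nil; unfold crit; split; [lra | reflexivity].
  - destruct (left_preimage lam q _ _ Hl ltac:(unfold crit in *; lra) E) as [Hx Ex].
    exists (q / lam); split; [lra | exact Ex].
Qed.

(** A binary word all of whose tails [σ^k(s ^ I(c))] are [≺ σ(K)] is realized by a
    point of [[0, T(c)]]: build the point backwards, letter by letter; the ordering
    hypothesis on each tail keeps the current point below [T(c)], so that both
    inverse branches remain available. *)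
Lemma admissible_word_realized lam Kplus w : 1 < lam <= 2 ->
  right_limit_itin lam crit Kplus -> binary_word w ->
  (forall k, (k <= length w)%nat ->
     plex_lt (shift k (wconcat w (itin lam crit))) (shift 1 Kplus)) ->
  exists q, 0 <= q <= lam / 2 /\ itin lam q = wconcat w (itin lam crit).
Proof.
  intros Hl HK; induction w as [|a w IH]; intros Hbin Hadm.
  - exists crit; rewrite wconcat_nil; unfold crit; split; [lra | reflexivity].
  - inversion Hbin as [|? ? Ha Hbin']; subst.
    destruct (IH Hbin') as [q [Hq E]].
    { intros k Hk; rewrite <- shift_succ_cons with (a := a); apply Hadm; simpl; lia. }
    assert (HCq : itin lam q (length w) = SC) by now rewrite E, wconcat_length, itin_crit_0.
    assert (Hq2 : q < lam / 2).
    { apply (below_critical_value lam Kplus Hl HK q (length w)); auto; [lra|].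
      rewrite E, <- (shift_0 (wconcat w _)), <- (shift_succ_cons a).
      apply Hadm; simpl; lia. }
    destruct Ha as [-> | ->].
    + destruct (left_preimage lam q _ _ ltac:(lra) ltac:(lra) E) as [Hx Ex].
      exists (q / lam); unfold crit in Hx; split; [lra | exact Ex].
    + destruct (right_preimage lam q _ _ ltac:(lra) ltac:(lra) E) as [Hx Ex].
      exists (1 - q / lam); split; [split; [unfold crit in Hx; lra|] | exact Ex].
      left; apply (below_critical_value lam Kplus Hl HK _ (S (length w)));
        [unfold crit in Hx; lra | | ].
      * now rewrite Ex, (wconcat_length (S1 :: w)), itin_crit_0.
      * rewrite Ex, <- (shift_0 (wconcat (S1 :: w) _)); apply Hadm; lia.
Qed.

Lemma iterT_succ_range lam k x : 0 < lam <= 2 -> 0 <= x <= 1 ->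
  0 <= iterT lam (S k) x <= lam / 2.
Proof.
  intros Hl Hx; simpl.
  pose proof (tent_unit lam _ Hl (iterT_unit lam k x Hl Hx)).
  pose proof (tent_le_max lam (iterT lam k x) (proj1 Hl)); lra.
Qed.

Lemma precritical_below_admissible lam Kplus p s : 1 < lam <= 2 ->
  right_limit_itin lam crit Kplus -> binary_word s -> 0 <= p < lam / 2 ->
  itin lam p = wconcat s (itin lam crit) ->
  forall k, (k <= length s)%nat ->
    plex_lt (shift k (wconcat s (itin lam crit))) (shift 1 Kplus).
Proof.
  intros Hl HK Hbin Hp E k Hk.
  rewrite <- E, shift_itin.
  apply (itin_below_kneading lam Kplus Hl HK _ (length s - k)).
  - split; [apply iterT_unit; lra|].
    apply orbit_below_critical_value; [lra | lra |].
    intros j Hj; apply (precritical_not_before lam p s Hbin E); lia.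
  - rewrite <- itin_shift, Nat.sub_add by exact Hk.
    apply address_SC, (precritical_time lam p s E).
Qed.

Lemma itin_crit_periodic lam m : iterT lam m crit = crit ->
  forall q r, itin lam crit (q * m + r) = itin lam crit r.
Proof.
  intros H q r; rewrite Nat.add_comm, itin_shift; f_equal.
  induction q as [|q IH]; simpl; auto; now rewrite iterT_add, IH.
Qed.

Lemma critical_orbit_periodic lam t : binary_word t ->
  itin lam (tent lam crit) = wconcat t (itin lam crit) ->
  prime_period lam crit (S (length t)) /\ itin lam crit = repeat_inf (SC :: t).
Proof.
  intros Hbin E.
  assert (Hper : iterT lam (S (length t)) crit = crit)
    by now rewrite iterT_succ_inner, (precritical_time lam _ t E).
  split; [split; [lia | split; [exact Hper|]]|].
  - intros [|j] Hj HC; [lia|].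
    rewrite iterT_succ_inner in HC; apply (precritical_not_before lam _ t Hbin E j); auto; lia.
  - apply functional_extensionality; intro i.
    rewrite (Nat.div_mod_eq i (S (length t))), Nat.mul_comm, itin_crit_periodic by exact Hper.
    unfold repeat_inf; change (length (SC :: t)) with (S (length t)).
    rewrite Nat.add_comm, Nat.Div0.mod_add, Nat.Div0.mod_mod.
    assert (Hr : (i mod S (length t) < S (length t))%nat) by (apply Nat.mod_upper_bound; lia).
    destruct (i mod S (length t)) as [|r]; [apply itin_crit_0|].
    rewrite itin_succ, E, wconcat_lt by lia; reflexivity.
Qed.

Lemma periodic_tail_itin lam t k : itin lam crit = repeat_inf (SC :: t) ->
  (k < length t)%nat ->
  itin lam (iterT lam (S k) crit) = wconcat (skipn k t) (itin lam crit).
Proof.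
  intros Hc Hk; apply functional_extensionality; intro i.
  rewrite <- itin_shift, Hc; unfold wconcat, repeat_inf; rewrite length_skipn.
  change (length (SC :: t)) with (S (length t)).
  destruct (Nat.ltb i (length t - k)) eqn:El.
  - apply Nat.ltb_lt in El; rewrite Nat.mod_small by lia.
    rewrite nth_skipn, Nat.add_succ_r; simpl; f_equal; lia.
  - apply Nat.ltb_ge in El.
    replace (i + S k)%nat with ((i - (length t - k)) + 1 * S (length t))%nat by lia.
    now rewrite Nat.Div0.mod_add.
Qed.

Theorem mainTheorem5 (lam : R) (Hlam : 1 < lam < 2)
  (Kplus : nat -> sym) (HKplus : right_limit_itin lam crit Kplus)
  (n : nat) (s : list sym) (Hlen : length s = n) (Hbin : binary_word s) :
  (exists p : R, 0 <= p <= tent lam crit /\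
     (exists i : nat, iterT lam i p = crit) /\
     itin lam p = wconcat s (itin lam crit))
  <->
  (s = repeat S0 n \/
   (forall k : nat, (k <= n)%nat ->
      plex_lt (shift k (wconcat s (itin lam crit))) (shift 1 Kplus)) \/
   (exists (m : nat) (t : list sym),
      prime_period lam crit m /\ length t = (m - 1)%nat /\ binary_word t /\
      itin lam crit = repeat_inf (SC :: t) /\
      exists k : nat, (k < m - 1)%nat /\ s = skipn k t)).
Proof.
  subst n; rewrite tent_crit.
  assert (Hl : 1 < lam <= 2) by lra.
  split.
  - intros [p [[Hp0 Hp1] [_ E]]].
    destruct (Rle_lt_or_eq_dec _ _ Hp1) as [Hlt | Heq].
    +
      right; left; exact (precritical_below_admissible lam Kplus p s Hl HKplus Hbin (conj Hp0 Hlt) E).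
    +
      destruct s as [|a s']; [now left|right; right].
      rewrite Heq, <- tent_crit in E.
      destruct (critical_orbit_periodic lam _ Hbin E) as [Hper Hc].
      exists (S (length (a :: s'))), (a :: s'); simpl in *.
      split; [exact Hper | split; [lia | split; [exact Hbin | split; [exact Hc |]]]].
      exists O; split; [lia | reflexivity].
  - intros Hcases.
    assert (Hreal : exists q, 0 <= q <= lam / 2 /\ itin lam q = wconcat s (itin lam crit)).
    { destruct Hcases as [Hzero | [Hadm | [m [t [_ [Hlen [_ [Hc [k [Hk ->]]]]]]]]]].
      - destruct (zero_word_realized lam (length s) (proj1 Hl)) as [q [Hq E]].
        rewrite <- Hzero in E; exists q; unfold crit in Hq; split; [lra | exact E].
      - now apply (admissible_word_realized lam Kplus).
      - exists (iterT lam (S k) crit); split.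
        + apply iterT_succ_range; unfold crit; lra.
        + apply periodic_tail_itin; auto; lia. }
    destruct Hreal as [q [Hq E]].
    exists q; split; [exact Hq | split; [exists (length s); now apply precritical_time | exact E]].
Qed.
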